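(* Let $\epsilon\in(0,0.01)$. There is a constant $c$ such that for all integers $k,m$ with $m\ge(\tfrac{1}{32\epsilon^2}-1)k\ge0$ and $k+m>0$, setting $\gamma=k+m$ and $$\xi_{k,m}(z)=\Big(\frac{1}{k!}\Big)^{1/2}\Big(\frac{\gamma}{2}\Big)^{\frac{k+1}{2}}\frac{z^k}{\sqrt\pi}\exp\Big(-\frac{\gamma}{4}|z|^2\Big),\qquad z\in\mathbb C,$$ one has $|\xi_{k,m}(z)|^2\le c\exp(-\tfrac{\gamma}{c}|z|^2)$ for every $z$ with $|z|\ge 9\epsilon$. *)

From Stdlib Require Import Reals.
From Coquelicot Require Import Coquelicot.
Open Scope R_scope.

Definition gam (k m : nat) : R := INR k + INR m.

Definition xi (k m : nat) (z : C) : C :=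
  Cmult
    (RtoC (sqrt (/ INR (Factorial.fact k)) * Rpower (gam k m / 2) ((INR k + 1) / 2)
           / sqrt PI * exp (- (gam k m / 4) * (Cmod z) ^ 2)))
    (Cpow z k).

(* Up to the factor [gam / (2 PI)], [|xi_{k,m}(z)|^2] is the Poisson weight
   [t^k/k! e^{-t}] at [t = gam |z|^2 / 2].  The hypothesis on [m] makes [k] at most
   [32 eps^2 gam], while [|z| >= 9 eps] makes [t] at least [81/2 eps^2 gam]; so
   [k <= 4t/5], and comparing [t^k/k!] with [e^{9t/10}] shows that the weight decays
   like [e^{-t/100}].  Half of this decay absorbs the prefactor [gam], the other half
   gives the Gaussian bound. *)

From Stdlib Require Import Reals Lra Lia.
From Coquelicot Require Import Coquelicot.
Open Scope R_scope.

Lemma exp_le_compat (x y : R) : x <= y -> exp x <= exp y.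
Proof. intros [Hlt | ->]; [left; exact (exp_increasing _ _ Hlt) | apply Rle_refl]. Qed.

Lemma exp_pow (a : R) (n : nat) : exp a ^ n = exp (INR n * a).
Proof.
  induction n as [|n IH].
  - now rewrite Rmult_0_l, exp_0.
  - rewrite S_INR, <- tech_pow_Rmult, IH, <- exp_plus; f_equal; ring.
Qed.

Lemma mul_exp_neg_le (b x : R) : 0 < b -> x * exp (- (b * x)) <= / b.
Proof.
  intro Hb.
  assert (Hx : b * x <= exp (b * x)) by (pose proof (exp_ineq1_le (b * x)); lra).
  assert (Hinv : exp (b * x) * exp (- (b * x)) = 1)
    by now rewrite <- exp_plus, Rplus_opp_r, exp_0.
  apply (Rmult_le_reg_l b); [exact Hb |].
  rewrite Rinv_r by lra; pose proof (exp_pos (- (b * x))); nra.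
Qed.

Lemma pow_div_fact_ge0 (x : R) (n : nat) :
  0 <= x -> 0 <= x ^ n / INR (Factorial.fact n).
Proof. intro Hx; apply Rdiv_le_0_compat; [now apply pow_le | apply INR_fact_lt_0]. Qed.

Lemma pow_div_fact_le_exp (x : R) (n : nat) :
  0 <= x -> x ^ n / INR (Factorial.fact n) <= exp x.
Proof.
  intro Hx; eapply Rle_trans; [| exact (exp_ge_taylor x n Hx)].
  destruct n as [|n]; [simpl; lra |].
  rewrite tech5; pose proof (cond_pos_sum _ n (fun i => pow_div_fact_ge0 x i Hx)); lra.
Qed.

Definition poisson_weight (t : R) (n : nat) : R :=
  t ^ n / INR (Factorial.fact n) * exp (- t).

Lemma poisson_weight_ge0 (t : R) (n : nat) : 0 <= t -> 0 <= poisson_weight t n.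
Proof.
  intro Ht; apply Rmult_le_pos; [now apply pow_div_fact_ge0 | left; apply exp_pos].
Qed.

(* Apply [pow_div_fact_le_exp] at [a t] and pay [(1/a)^n <= e^{n (1/a - 1)}]. *)
Lemma poisson_weight_le (a t : R) (n : nat) : 0 < a -> 0 <= t ->
  poisson_weight t n <= exp (INR n * (/ a - 1) - (1 - a) * t).
Proof.
  intros Ha Ht; unfold poisson_weight.
  assert (Hinv : (/ a) ^ n <= exp (INR n * (/ a - 1))).
  { rewrite <- exp_pow; apply pow_incr; split.
    - left; now apply Rinv_0_lt_compat.
    - pose proof (exp_ineq1_le (/ a - 1)); lra. }
  assert (Htaylor := pow_div_fact_le_exp (a * t) n ltac:(nra)).
  replace (t ^ n / INR (Factorial.fact n))
    with ((/ a) ^ n * ((a * t) ^ n / INR (Factorial.fact n)))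
    by (unfold Rdiv; rewrite <- Rmult_assoc, <- Rpow_mult_distr;
        f_equal; f_equal; field; lra).
  replace (INR n * (/ a - 1) - (1 - a) * t) with (INR n * (/ a - 1) + a * t + - t)
    by ring.
  rewrite !exp_plus.
  apply Rmult_le_compat_r; [left; apply exp_pos |].
  apply Rmult_le_compat; auto.
  - apply pow_le; left; now apply Rinv_0_lt_compat.
  - apply pow_div_fact_ge0; nra.
Qed.

Lemma poisson_weight_le_exp (t : R) (n : nat) : 0 <= t -> INR n <= 4 / 5 * t ->
  poisson_weight t n <= exp (- (t / 100)).
Proof.
  intros Ht Hn; eapply Rle_trans; [exact (poisson_weight_le (9 / 10) t n ltac:(lra) Ht) |].
  apply exp_le_compat; replace (/ (9 / 10)) with (10 / 9) by field; lra.
Qed.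

Lemma Cmod_xi_sqr (k m : nat) (z : C) : 0 < gam k m ->
  Cmod (xi k m z) ^ 2 = gam k m / (2 * PI) * poisson_weight (gam k m * Cmod z ^ 2 / 2) k.
Proof.
  intro Hg; unfold xi, poisson_weight.
  rewrite Cmod_mult, Cmod_R, Cmod_pow, Rpow_mult_distr, pow2_abs.
  set (g := gam k m) in *; set (r := Cmod z); set (t := g * r ^ 2 / 2).
  assert (Hf := INR_fact_lt_0 k).
  assert (HPI := PI_RGT_0).
  assert (Hsqrt_fact : sqrt (/ INR (Factorial.fact k)) ^ 2 = / INR (Factorial.fact k))
    by (apply pow2_sqrt; left; now apply Rinv_0_lt_compat).
  assert (Hsqrt_PI : sqrt PI ^ 2 = PI) by (apply pow2_sqrt; lra).
  assert (Hsqrt_PI_pos : 0 < sqrt PI) by (apply sqrt_lt_R0; lra).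
  assert (HRpower : Rpower (g / 2) ((INR k + 1) / 2) ^ 2 = g / 2 * (g / 2) ^ k).
  { rewrite <- Rsqr_pow2; unfold Rsqr; rewrite <- Rpower_plus.
    replace ((INR k + 1) / 2 + (INR k + 1) / 2) with (INR (S k)) by (rewrite S_INR; field).
    rewrite Rpower_pow; [reflexivity | lra]. }
  assert (Hgauss : exp (- (g / 4) * r ^ 2) ^ 2 = exp (- t)).
  { rewrite exp_pow; f_equal; unfold t; simpl; field. }
  replace ((sqrt (/ INR (Factorial.fact k)) * Rpower (g / 2) ((INR k + 1) / 2)
            / sqrt PI * exp (- (g / 4) * r ^ 2)) ^ 2)
    with (sqrt (/ INR (Factorial.fact k)) ^ 2 * Rpower (g / 2) ((INR k + 1) / 2) ^ 2
          / sqrt PI ^ 2 * exp (- (g / 4) * r ^ 2) ^ 2) by (field; lra).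
  rewrite Hsqrt_fact, Hsqrt_PI, HRpower, Hgauss.
  replace (t ^ k) with ((g / 2) ^ k * (r ^ k) ^ 2)
    by (unfold t; rewrite <- pow_mult, Nat.mul_comm, pow_mult, <- Rpow_mult_distr;
        f_equal; field).
  field; lra.
Qed.

Lemma le_mul_plus_of_inv_sub_one_mul_le (a x y : R) :
  0 < a -> (1 / a - 1) * x <= y -> x <= a * (x + y).
Proof.
  intros Ha Hxy; apply (Rmult_le_compat_l a) in Hxy; [| lra].
  replace (a * ((1 / a - 1) * x)) with (x - a * x) in Hxy by (field; lra).
  lra.
Qed.

Theorem lemma5p9 (eps : R) (Heps : 0 < eps < 1 / 100) :
  exists c : R, 0 < c /\
    forall k m : nat,
      (1 / (32 * eps ^ 2) - 1) * INR k <= INR m ->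
      (0 < k + m)%nat ->
      forall z : C, 9 * eps <= Cmod z ->
        (Cmod (xi k m z)) ^ 2 <= c * exp (- (gam k m / c) * (Cmod z) ^ 2).
Proof.
  set (b := 81 * eps ^ 2 / 400).
  assert (Hb : 0 < b < 1 / 400) by (unfold b; split; nra).
  exists (/ b); split; [now apply Rinv_0_lt_compat |].
  intros k m Hkm Hkm_pos z Hz.
  assert (Hg : 0 < gam k m) by (unfold gam; rewrite <- plus_INR; apply lt_0_INR; lia).
  assert (Hk := le_mul_plus_of_inv_sub_one_mul_le (32 * eps ^ 2) _ _ ltac:(nra) Hkm).
  rewrite (Cmod_xi_sqr k m z Hg).
  replace (gam k m / / b) with (gam k m * b) by (unfold Rdiv; now rewrite Rinv_inv).
  fold (gam k m) in Hk; set (g := gam k m) in *; set (r := Cmod z) in *.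
  set (t := g * r ^ 2 / 2).
  assert (Hr : 81 * eps ^ 2 <= r ^ 2) by (simpl; nra).
  assert (Ht : 200 * b * g <= t) by (unfold t, b; nra).
  assert (Hweight : poisson_weight t k <= exp (- (t / 200)) * exp (- (t / 200)))
    by (rewrite <- exp_plus; replace (- (t / 200) + - (t / 200)) with (- (t / 100)) by field;
        apply poisson_weight_le_exp; unfold t, b in *; nra).
  assert (Hprefactor : g * exp (- (t / 200)) <= / b).
  { eapply Rle_trans; [| exact (mul_exp_neg_le b g (proj1 Hb))].
    apply Rmult_le_compat_l, exp_le_compat; lra. }
  assert (Hdecay : exp (- (t / 200)) <= exp (- (g * b) * r ^ 2)).
  { assert (0 <= g * r ^ 2) by (apply Rmult_le_pos; [lra | apply pow2_ge_0]).
    assert (81 * eps ^ 2 <= 1) by nra.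
    apply exp_le_compat; unfold t, b; nra. }
  assert (Hprefactor_PI : g / (2 * PI) <= g).
  { pose proof PI2_1; apply Rmult_le_reg_r with (2 * PI); [lra |].
    field_simplify; nra. }
  assert (HW := poisson_weight_ge0 t k ltac:(unfold t; nra)).
  pose proof (exp_pos (- (t / 200))).
  apply Rle_trans with (g * exp (- (t / 200)) * exp (- (t / 200))); [nra |].
  apply Rmult_le_compat; nra.
Qed.
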